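(* For every positive integer $n$, $|\Delta(n)|$ equals the number of partitions of $n$ into distinct parts, which equals the number of partitions of $n$ into odd parts.
   Context: A partition of a positive integer $n$ is a finite non-increasing sequence $\alpha=(\alpha_1,\dots,\alpha_l)$ of positive integers with sum $n$; $\mathcal{P}(n)$ is the set of partitions of $n$, and $\alpha_i=0$ for $i>l$. The diagonal sequence is $\delta(\alpha)=(d_k)_{k\ge1}$ with $d_k=|\{i:1\le i\le k,\ \alpha_i+i-1\ge k\}|$, trailing zeros omitted, and $\Delta(n)=\{\delta(\alpha):\alpha\in\mathcal{P}(n)\}$. *)

From mathcomp Require Import all_boot.
Set Implicit Arguments. Unset Strict Implicit. Unset Printing Implicit Defensive.

(* A partition of n: a finite non-increasing sequence of positive integers
   with sum n, represented as a seq nat (alpha_1 is the head). *)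
Definition is_partition (n : nat) (a : seq nat) : Prop :=
  sorted geq a /\ all (fun x => 0 < x) a /\ sumn a = n.

(* alpha_i for 1-based i, with alpha_i = 0 for i > length. *)
Definition part (a : seq nat) (i : nat) : nat := nth 0 a i.-1.

Definition diag_entry (a : seq nat) (k : nat) : nat :=
  count (fun i => k <= part a i + i - 1) (iota 1 k).

Definition strip_zeros (s : seq nat) : seq nat :=
  rev (drop (find (fun x => x != 0) (rev s)) (rev s)).

(* d_k = 0 whenever k > sumn a (indeed k > max_i (alpha_i + i - 1)),
   so computing d_1 .. d_{sumn a} and stripping trailing zeros gives
   the diagonal sequence delta(alpha) with trailing zeros omitted. *)
Definition delta (a : seq nat) : seq nat :=
  strip_zeros [seq diag_entry a k | k <- iota 1 (sumn a)].

Definition in_Delta (n : nat) (d : seq nat) : Prop :=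
  exists a, is_partition n a /\ delta a = d.

Definition distinct_partition (n : nat) (a : seq nat) : Prop :=
  is_partition n a /\ uniq a.

Definition odd_partition (n : nat) (a : seq nat) : Prop :=
  is_partition n a /\ all odd a.

(* L is a duplicate-free enumeration of the set P; its size is then |P|. *)
Definition enumerates (P : seq nat -> Prop) (L : seq (seq nat)) : Prop :=
  uniq L /\ forall x, x \in L <-> P x.

From mathcomp Require Import all_boot zify.
Set Implicit Arguments. Unset Strict Implicit. Unset Printing Implicit Defensive.

(* Glaisher's bijection: a part o * 2^a (o odd) of a distinct partition splits into
   2^a parts equal to o; conversely, o repeated m times merges into the parts o * 2^a
   for the binary digits a of m.  Both maps are injective, so the distinct and the
   odd partitions of n are equinumerous.

   For a partition with distinct parts l, the numbers l_j + j - 1 are non-increasing,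
   whence j <= d_k iff j <= k <= l_j + j - 1, and l_j = #{k | j <= d_k}: delta is
   injective on distinct partitions.  For an arbitrary partition a, the diagonal
   sequence is a staircase: d_k = k up to some t, then non-increasing and bounded by
   t.  The conjugate l_j := #{k | j <= d_k} (1 <= j <= t) of such a sequence is a
   distinct partition with diagonal sequence d, and sumn l = sum_k d_k = sumn a.
   Hence delta maps the distinct partitions of n onto Delta(n), injectively. *)

Lemma geq_anti : antisymmetric geq.
Proof. by move=> m n; rewrite andbC => /anti_leq. Qed.

Lemma geq_total : total geq.
Proof. by move=> m n; apply: leq_total. Qed.

Lemma count_eq0_in (T : eqType) (P : pred T) s : {in s, forall x, ~~ P x} -> count P s = 0.
Proof. by move=> notP; apply/eqP; rewrite -leqn0 leqNgt -has_count; apply/hasPn. Qed.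

Lemma count_ge_succ_lt (T : eqType) (f : T -> nat) s j : j \in map f s ->
  count (fun x => j.+1 <= f x) s < count (fun x => j <= f x) s.
Proof.
elim: s => //= x s IH; rewrite inE => /predU1P [-> | /IH lt_count].
  by rewrite ltnn leqnn add1n ltnS; apply: sub_count => y; apply: ltnW.
by rewrite -addnS leq_add //; case: ltnP => // /ltnW ->.
Qed.

Lemma eqn_from_leq m n : (forall j, 0 < j -> (j <= m) = (j <= n)) -> m = n.
Proof.
move=> eq_le; apply/anti_leq/andP; split; [case: m eq_le | case: n eq_le] => // k eq_le.
  by rewrite -eq_le.
by rewrite eq_le.
Qed.

Lemma count_iota_interval i b M : 0 < i ->
  count (fun k => (i <= k) && (k <= b)) (iota 1 M) = (minn b M).+1 - i.
Proof.
move=> i_gt0; elim: M => [|M IH]; first by rewrite minn0; apply/esym/eqP; rewrite subn_eq0.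
rewrite -[M.+1]addn1 iotaD count_cat IH /= add1n addn0; lia.
Qed.

Lemma count_iota_downward (P : pred nat) s m :
    (forall x y, s <= x <= y -> y < s + m -> P y -> P x) ->
  forall k, s <= k < s + m -> P k = (k < s + count P (iota s m)).
Proof.
elim: m s => [|m IH] s P_down k; first by rewrite addn0 ltnNge => /andP [->].
move=> /andP [le_sk lt_k] /=.
have P_downS x y : s.+1 <= x <= y -> y < s.+1 + m -> P y -> P x.
  by move=> /andP [lt_sx le_xy] lt_y; apply: P_down; rewrite ?le_xy ?andbT ?addnS // ltnW.
have [Ps | notPs] := boolP (P s).
  rewrite [_ + count _ _]add1n addnS -addSn.
  have [<- | neq_sk] := eqVneq s k; first by rewrite Ps ltnS leq_addr.
  by apply: IH => //; rewrite ltn_neqAle neq_sk le_sk addSnnS.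
have notP x : s <= x < s + m.+1 -> P x = false.
  by move=> /andP [le_sx lt_x]; apply/negbTE; apply: contra notPs; apply: P_down; rewrite ?leqnn.
rewrite [_ + count _ _]add0n notP ?le_sk // count_eq0_in ?addn0 ?ltnNge ?le_sk // => x.
by rewrite mem_iota => /andP [lt_sx lt_x]; rewrite notP // ltnW // addnS.
Qed.

Lemma sumn_pow2_halves (B : seq nat) : uniq B ->
  sumn [seq 2 ^ b | b <- B] = (0 \in B) + 2 * sumn [seq 2 ^ b.-1 | b <- B & 0 < b].
Proof.
elim: B => [|b B IH] //= /andP [bB uB]; rewrite IH // in_cons.
case: b bB => [|b] bB /=; first by rewrite (negbTE bB).
by rewrite expnS mulnDr addnCA.
Qed.

Lemma odd_sumn_pow2_div (B : seq nat) a : uniq B ->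
  odd (sumn [seq 2 ^ b | b <- B] %/ 2 ^ a) = (a \in B).
Proof.
elim: a B => [|a IH] B uB; rewrite sumn_pow2_halves //.
  by rewrite expn0 divn1 oddD oddM /= addbF oddb.
rewrite expnS divnMA addnC mulnC divnMDl // [(_ \in _) %/ 2]divn_small ?addn0; last first.
  by case: (0 \in B).
rewrite (map_comp (expn 2) predn) IH ?map_inj_in_uniq ?filter_uniq // => [|x y].
  apply/mapP/idP => [[b] | aB]; last by exists a.+1; rewrite ?mem_filter.
  by rewrite mem_filter => /andP [b_gt0 bB] ->; rewrite prednK.
by rewrite !mem_filter => /andP [x_gt0 _] /andP [y_gt0 _] /= /eqP; rewrite -eqSS !prednK // => /eqP.
Qed.

Lemma eq_from_binary m n :
  (forall a, odd (m %/ 2 ^ a) = odd (n %/ 2 ^ a)) -> m = n.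
Proof.
elim: {m n}(m + n) {-2}m {-2}n (leqnn (m + n)) => [|N IH] m n le_mnN eq_bits.
  by move: le_mnN; rewrite leqn0 addn_eq0 => /andP [/eqP -> /eqP ->].
have half_eq : m./2 = n./2.
  apply: IH => [|a]; first by lia.
  by rewrite -!divn2 -!divnMA -expnS.
have := eq_bits 0; rewrite expn0 !divn1 => odd_eq.
by rewrite -[m]odd_double_half -[n]odd_double_half half_eq odd_eq.
Qed.

Definition bits c := [seq a <- iota 0 c | odd (c %/ 2 ^ a)].

Lemma mem_bits c a : (a \in bits c) = odd (c %/ 2 ^ a).
Proof.
rewrite mem_filter mem_iota /=; case: ltnP => [_|le_ca]; first by rewrite andbT.
by rewrite andbF divn_small // (leq_ltn_trans le_ca) // ltn_expl.
Qed.

Lemma sumn_bits c : sumn [seq 2 ^ a | a <- bits c] = c.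
Proof.
apply: eq_from_binary => a.
by rewrite odd_sumn_pow2_div ?mem_bits // filter_uniq ?iota_uniq.
Qed.

Definition odd_part x := x %/ 2 ^ logn 2 x.

Lemma odd_partK x : odd_part x * 2 ^ logn 2 x = x.
Proof. exact/divnK/pfactor_dvdnn. Qed.

Lemma odd_odd_part x : 0 < x -> odd (odd_part x).
Proof.
move=> x_gt0; have [m coprime_m x_eq] := pfactor_coprime (isT : prime 2) x_gt0.
by rewrite /odd_part {1}x_eq mulnK ?expn_gt0 // -coprime2n.
Qed.

Lemma odd_part_gt0 x : 0 < x -> 0 < odd_part x.
Proof. by move/odd_odd_part; case: (odd_part x). Qed.

Lemma logn2_odd_mul o a : odd o -> logn 2 (o * 2 ^ a) = a.
Proof.
move=> odd_o; have o_gt0 : 0 < o by case: o odd_o.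
by rewrite lognM ?expn_gt0 // logn_coprime ?coprime2n // pfactorK.
Qed.

Lemma odd_part_odd_mul o a : odd o -> odd_part (o * 2 ^ a) = o.
Proof. by move=> odd_o; rewrite /odd_part logn2_odd_mul // mulnK ?expn_gt0. Qed.

Lemma odd_mul_pow2_inj o o' a a' : odd o -> odd o' ->
  o * 2 ^ a = o' * 2 ^ a' -> o = o' /\ a = a'.
Proof.
move=> odd_o odd_o' eq_oa; split.
  by rewrite -(odd_part_odd_mul a odd_o) eq_oa odd_part_odd_mul.
by rewrite -(logn2_odd_mul a odd_o) eq_oa logn2_odd_mul.
Qed.

Lemma odd_part_logn2_inj x y :
  odd_part x = odd_part y -> logn 2 x = logn 2 y -> x = y.
Proof. by move=> eq_odd eq_logn; rewrite -[x]odd_partK -[y]odd_partK eq_odd eq_logn. Qed.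

Lemma distinct_partitionP n l :
  distinct_partition n l <-> [/\ sorted gtn l, all (fun x => 0 < x) l & sumn l = n].
Proof.
by rewrite gtn_sorted_uniq_geq; split=> [[[-> [-> ->]] ->] | [/andP [? ?] ? ?]].
Qed.

Definition odd_of_distinct (l : seq nat) : seq nat :=
  sort geq (flatten [seq nseq (2 ^ logn 2 x) (odd_part x) | x <- l]).

Definition distinct_of_odd (y : seq nat) : seq nat :=
  sort geq [seq o * 2 ^ a | o <- undup y, a <- bits (count_mem o y)].

Lemma count_odd_of_distinct o l : count_mem o (odd_of_distinct l) =
  sumn [seq 2 ^ logn 2 x | x <- l & odd_part x == o].
Proof.
rewrite /odd_of_distinct count_sort.
elim: l => [|x l IH] //=; rewrite count_cat IH count_nseq /=.
by case: (odd_part x == o); rewrite ?mul1n ?mul0n.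
Qed.

Lemma mem_count_odd_of_distinct l x : sorted gtn l -> 0 < x ->
  (x \in l) = odd (count_mem (odd_part x) (odd_of_distinct l) %/ 2 ^ logn 2 x).
Proof.
move=> l_decr x_gt0; have l_uniq := sorted_uniq (rev_trans ltn_trans) ltnn l_decr.
rewrite count_odd_of_distinct (map_comp (expn 2) (logn 2)) odd_sumn_pow2_div; last first.
  rewrite map_inj_in_uniq ?filter_uniq // => y z.
  rewrite !mem_filter => /andP [/eqP odd_y _] /andP [/eqP odd_z _].
  by apply: odd_part_logn2_inj; rewrite odd_y odd_z.
apply/idP/mapP => [xl | [y]]; first by exists x; rewrite ?mem_filter ?eqxx.
by rewrite mem_filter => /andP [/eqP eq_odd yl] /esym/(odd_part_logn2_inj eq_odd) <-.
Qed.

Lemma odd_of_distinct_partition n l :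
  distinct_partition n l -> odd_partition n (odd_of_distinct l).
Proof.
move=> [[_ [l_pos <-]] _].
have odd_parts z : z \in odd_of_distinct l -> odd z /\ 0 < z.
  rewrite mem_sort => /flattenP [_ /mapP [x xl ->] /nseqP [-> _]].
  have x_gt0 : 0 < x by apply: (allP l_pos).
  by rewrite odd_part_gt0 ?odd_odd_part.
split; [split; [|split] | ]; first exact: sort_sorted geq_total _.
- by apply/allP => z /odd_parts [].
- rewrite (perm_sumn (permEl (perm_sort geq _))) sumn_flatten -map_comp.
  by rewrite -[in RHS](map_id l); congr sumn; apply: eq_map => x /=; rewrite sumn_nseq odd_partK.
- by apply/allP => z /odd_parts [].
Qed.

Lemma odd_of_distinct_inj n l l' : distinct_partition n l -> distinct_partition n l' ->
  odd_of_distinct l = odd_of_distinct l' -> l = l'.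
Proof.
move=> /distinct_partitionP [l_decr l_pos _] /distinct_partitionP [l'_decr l'_pos _] eq_odd.
apply: (irr_sorted_eq (rev_trans ltn_trans) ltnn l_decr l'_decr) => x.
have [->|x_gt0] := posnP x.
  by apply/idP/idP => [/(allP l_pos) | /(allP l'_pos)].
by rewrite !mem_count_odd_of_distinct // eq_odd.
Qed.

Lemma mem_distinct_of_odd y o a : all odd y -> odd o ->
  (o * 2 ^ a \in distinct_of_odd y) = odd (count_mem o y %/ 2 ^ a).
Proof.
move=> y_odd odd_o; rewrite mem_sort.
apply/allpairsPdep/idP => [[o' [a' [o'y a'_bits eq_oa]]] | odd_count].
  have odd_o' : odd o' by apply: (allP y_odd); rewrite -mem_undup.
  by have [-> ->] := odd_mul_pow2_inj odd_o odd_o' eq_oa; rewrite -mem_bits.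
exists o, a; split; rewrite ?mem_bits //.
rewrite mem_undup -has_pred1 has_count.
by move: odd_count; case: (count _ y); rewrite ?div0n.
Qed.

Lemma distinct_of_odd_partition n y :
  odd_partition n y -> distinct_partition n (distinct_of_odd y).
Proof.
move=> [[_ [y_pos <-]] y_odd].
split; [split; [|split] | ]; first exact: sort_sorted geq_total _.
- apply/allP => z; rewrite mem_sort => /allpairsPdep [o [a [oy _ ->]]].
  by rewrite muln_gt0 expn_gt0 andbT (allP y_pos) // -mem_undup.
- rewrite (perm_sumn (permEl (perm_sort geq _))) sumn_flatten -map_comp.
  rewrite -(perm_sumn (perm_count_undup y)) sumn_flatten -map_comp.
  congr sumn; apply: eq_map => o /=.
  rewrite sumn_nseq -{2}(sumn_bits (count_mem o y)) !sumnE !big_map.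
  by rewrite big_distrr.
- rewrite /distinct_of_odd sort_uniq; apply: allpairs_uniq_dep => [||p q].
  + exact: undup_uniq.
  + by move=> o _; rewrite filter_uniq ?iota_uniq.
  move=> /allpairsPdep [o [a [oy _ ->]]] /allpairsPdep [o' [a' [o'y _ ->]]] /= eq_oa.
  have [odd_o odd_o'] : odd o /\ odd o' by rewrite !(allP y_odd) // -mem_undup.
  by have [-> ->] := odd_mul_pow2_inj odd_o odd_o' eq_oa.
Qed.

Lemma distinct_of_odd_inj n y y' : odd_partition n y -> odd_partition n y' ->
  distinct_of_odd y = distinct_of_odd y' -> y = y'.
Proof.
move=> [[y_sorted _] y_odd] [[y'_sorted _] y'_odd] eq_distinct.
apply: (sorted_eq (rev_trans leq_trans) geq_anti y_sorted y'_sorted).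
apply/allP => x _; apply/eqP; have [odd_x | even_x] := boolP (odd x).
  by apply: eq_from_binary => a; rewrite -!mem_distinct_of_odd // eq_distinct.
have count0 z : all odd z -> count_mem x z = 0.
  by move=> z_odd; apply/count_memPn; apply: contra even_x; apply: (allP z_odd).
by rewrite !count0.
Qed.

Definition shifted_part (a : seq nat) (i : nat) := part a i + i - 1.

Lemma part_eq0 a i : size a < i -> part a i = 0.
Proof. by move=> lt_ai; rewrite /part nth_default // -ltnS prednK // (leq_ltn_trans _ lt_ai). Qed.

Lemma part_le_sumn a i : part a i <= sumn a.
Proof.
rewrite /part; elim: a i.-1 => [|x a IH] [|j] //=; first exact: leq_addr.
exact: leq_trans (IH j) (leq_addl _ _).
Qed.

Lemma size_le_sumn a : all (fun x => 0 < x) a -> size a <= sumn a.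
Proof. by elim: a => //= x a IH /andP [x_gt0 /IH]; rewrite -add1n; apply: leq_add. Qed.

Lemma shifted_part_le_sumn a i : all (fun x => 0 < x) a -> 0 < i <= size a ->
  shifted_part a i <= sumn a.
Proof.
move=> a_pos /andP [i_gt0 le_ia]; have lt_ia : i.-1 < size a by rewrite prednK.
have take_pos : all (fun x => 0 < x) (take i.-1 a).
  by move: a_pos; rewrite -{1}(cat_take_drop i.-1 a) all_cat => /andP [].
rewrite -{2}(cat_take_drop i.-1 a) (drop_nth 0 lt_ia) sumn_cat /= /shifted_part /part.
have := size_le_sumn take_pos.
by rewrite size_take lt_ia; lia.
Qed.

Lemma diag_entry_le a k : diag_entry a k <= k.
Proof. by rewrite -[leqRHS](size_iota 1) count_size. Qed.

Lemma diag_entry_eq0 a k : all (fun x => 0 < x) a -> sumn a < k -> diag_entry a k = 0.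
Proof.
move=> a_pos lt_ak; apply: count_eq0_in => i.
rewrite mem_iota add1n ltnS -ltnNge => /andP [i_gt0 le_ik].
have [le_ia | lt_ai] := leqP i (size a).
  by apply: leq_ltn_trans lt_ak; apply: shifted_part_le_sumn; rewrite ?i_gt0.
by rewrite /shifted_part part_eq0 // add0n subn1 (leq_trans _ le_ik) // ltn_predL.
Qed.

Lemma sumn_part a M : size a <= M -> sumn [seq part a i | i <- iota 1 M] = sumn a.
Proof.
elim: a M => [|x a IH] [|M] //= le_aM.
  by rewrite sumnE big_map big1 // => i _; rewrite /part nth_nil.
rewrite -(IH M) // (iotaDl 1 1) -map_comp; congr (_ + sumn _).
by apply/eq_in_map => i; rewrite mem_iota => /andP [i_gt0 _] /=; rewrite /part add1n; case: i i_gt0.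
Qed.

Lemma sumn_diag_entry a M : size a <= M ->
    (forall i, 0 < i <= size a -> shifted_part a i <= M) ->
  sumn [seq diag_entry a k | k <- iota 1 M] = sumn a.
Proof.
move=> le_aM shifted_le.
(* Both sides count the pairs (i, k) with 1 <= i <= k <= shifted_part a i. *)
pose inside i k := (i <= k) && (k <= shifted_part a i).
have diagE k : k \in iota 1 M -> diag_entry a k = count (inside^~ k) (iota 1 M).
  rewrite mem_iota add1n ltnS => /andP [_ le_kM].
  rewrite -(subnKC le_kM) iotaD count_cat add1n.
  rewrite [count _ (iota k.+1 _)]count_eq0_in ?addn0 => [|i]; last first.
    by rewrite mem_iota /inside => /andP [lt_ki _]; rewrite leqNgt lt_ki.
  by apply: eq_in_count => i; rewrite mem_iota add1n ltnS /inside => /andP [_ ->].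
rewrite -(sumn_part le_aM) (iffLR (eq_in_map _ _ _) diagE) !sumnE !big_map.
under eq_bigr do rewrite -sumn_count sumnE big_map.
rewrite exchange_big; apply: eq_big_seq => i; rewrite mem_iota add1n ltnS => /andP [i_gt0 le_iM].
have -> : \sum_(k <- iota 1 M) inside i k = count (inside i) (iota 1 M).
  by rewrite -sumn_count sumnE big_map.
rewrite count_iota_interval //.
have [le_ia | lt_ai] := leqP i (size a).
  by have := shifted_le i; rewrite i_gt0 le_ia /shifted_part => /(_ isT); lia.
by rewrite /shifted_part part_eq0 //; lia.
Qed.

Lemma part_noninc a i j : sorted geq a -> i <= j -> part a j <= part a i.
Proof.
move=> a_sorted le_ij; rewrite /part.
have le_pred : i.-1 <= j.-1 by rewrite -!subn1 leq_sub2r.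
have [lt_ja | le_aj] := ltnP j.-1 (size a); last by rewrite nth_default.
apply: (sorted_leq_nth (rev_trans leq_trans) leqnn 0 a_sorted); rewrite ?inE //.
exact: leq_ltn_trans le_pred lt_ja.
Qed.

Lemma shifted_part_succ a i : sorted geq a ->
  shifted_part a i.+1 <= (shifted_part a i).+1.
Proof.
move=> a_sorted; have := part_noninc a_sorted (leqnSn i).
by rewrite /shifted_part; lia.
Qed.

Lemma diag_entry_succ a k : sorted geq a -> diag_entry a k < k ->
  diag_entry a k.+1 <= diag_entry a k.
Proof.
move=> a_sorted lt_dk.
have /hasP [i0] : has (fun i => shifted_part a i < k) (iota 1 k).
  rewrite has_count (@eq_count _ _ (predC (fun i => k <= shifted_part a i))) => [|i].
    by rewrite -(ltn_add2l (diag_entry a k)) addn0 count_predC size_iota.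
  by rewrite /= ltnNge.
rewrite mem_iota add1n ltnS => /andP [_ le_i0k] lt_i0.
have iota_split n : i0 <= n -> iota 1 n = iota 1 i0 ++ iota i0.+1 (n - i0).
  by move=> le_i0n; rewrite -{1}(subnKC le_i0n) iotaD add1n.
(* Past i0 the counted indices of d_{k+1} shift down by one into those of d_k,
   because shifted_part a grows by at most one per step. *)
rewrite /diag_entry (iota_split k.+1) ?(iota_split k) ?(leqW le_i0k) // subSn //.
rewrite !count_cat leq_add //.
  by apply: sub_count => i /=; apply: ltnW.
have /= -> : k < shifted_part a i0.+1 = false.
  by apply/negbTE; rewrite -leqNgt (leq_trans (shifted_part_succ i0 a_sorted)).
rewrite [false + _]add0n (iotaDl 1 i0.+1) count_map; apply: sub_count => i /= lt_k.
by rewrite -ltnS (leq_trans lt_k (shifted_part_succ i a_sorted)).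
Qed.

Lemma diag_entry_staircase a : sorted geq a -> all (fun x => 0 < x) a ->
  exists t, [/\ forall k, k <= t -> diag_entry a k = k,
    forall k, diag_entry a k <= t &
    forall x y, t < x -> x <= y -> diag_entry a y <= diag_entry a x].
Proof.
move=> a_sorted a_pos.
have ex_short : exists k, diag_entry a k.+1 < k.+1.
  by exists (sumn a); rewrite diag_entry_eq0.
have [t lt_dt t_min] := ex_minnP ex_short.
have short k : t < k -> diag_entry a k < k.
  elim: k => // k IH; rewrite ltnS leq_eqVlt => /orP [/eqP <- // | /IH lt_dk].
  by rewrite ltnS (leq_trans (diag_entry_succ a_sorted lt_dk)) // ltnW.
have d_noninc x y : t < x -> x <= y -> diag_entry a y <= diag_entry a x.
  move=> lt_tx /subnK <-; elim: (y - x) => // m IH; rewrite addSn.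
  apply: leq_trans (diag_entry_succ a_sorted (short _ _)) IH.
  by rewrite (leq_trans lt_tx) ?leq_addl.
exists t; split=> // [[|k] le_kt | k] //.
  apply/eqP; rewrite eqn_leq diag_entry_le leqNgt; apply/negP => /t_min.
  by rewrite leqNgt le_kt.
have [le_kt | lt_tk] := leqP k t; first exact: leq_trans (diag_entry_le a k) le_kt.
exact: leq_trans (d_noninc _ _ (ltnSn t) lt_tk) lt_dt.
Qed.

Section DistinctParts.

Variable l : seq nat.
Hypothesis l_decr : sorted gtn l.

Lemma shifted_part_noninc i j : 0 < i <= j -> j <= size l ->
  shifted_part l j <= shifted_part l i.
Proof.
move=> /andP [i_gt0 le_ij]; rewrite -(subnK le_ij); elim: (j - i) => // m IH le_ml.
have part_decr : part l (m + i).+1 < part l (m + i).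
  case: i i_gt0 le_ml {IH le_ij} => // i _ le_ml; rewrite addnS /part /=.
  by apply: (elimT (sortedP 0) l_decr); rewrite addSn addnS in le_ml.
apply: leq_trans (IH (ltnW le_ml)); rewrite /shifted_part addSn.
by move: part_decr; lia.
Qed.

Lemma leq_diag_entry j k : 0 < j ->
  (j <= diag_entry l k) = (j <= k) && (k <= shifted_part l j).
Proof.
move=> j_gt0; pose P i := k <= shifted_part l i.
have P_down x y : 1 <= x <= y -> y < 1 + k -> P y -> P x.
  move=> /andP [x_gt0 le_xy] lt_yk; rewrite /P.
  have [le_yl | lt_ly] := leqP y (size l).
    by move=> /leq_trans; apply; apply: shifted_part_noninc; rewrite ?x_gt0.
  by rewrite /shifted_part part_eq0 //; lia.
have [le_jk | lt_kj] := leqP j k; last first.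
  by rewrite andFb; apply/negbTE; rewrite -ltnNge (leq_ltn_trans (diag_entry_le l k)).
by rewrite andTb -/(P j) (count_iota_downward P_down) ?j_gt0 ?add1n ?ltnS.
Qed.

Lemma part_count_diag_entry j M : 0 < j -> shifted_part l j <= M ->
  part l j = count (fun k => j <= diag_entry l k) (iota 1 M).
Proof.
move=> j_gt0 le_jM; rewrite (eq_count (fun k => leq_diag_entry k j_gt0)).
by rewrite count_iota_interval // (minn_idPl le_jM) /shifted_part; lia.
Qed.

End DistinctParts.

Lemma eq_from_part a b : all (fun x => 0 < x) a -> all (fun x => 0 < x) b ->
  (forall j, 0 < j -> part a j = part b j) -> a = b.
Proof.
move=> a_pos b_pos eq_part; have eq_nth i : nth 0 a i = nth 0 b i := eq_part i.+1 isT.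
have size_le c c' : all (fun x => 0 < x) c -> (forall i, nth 0 c i = nth 0 c' i) ->
    size c <= size c'.
  move=> c_pos eq_cc'; rewrite leqNgt; apply/negP => lt_c'c.
  by have := allP c_pos _ (mem_nth 0 lt_c'c); rewrite eq_cc' nth_default.
apply: (eq_from_nth (x0 := 0)) => [|i _]; last exact: eq_nth.
by apply/anti_leq; rewrite !size_le // => i; rewrite eq_nth.
Qed.

Lemma diag_entry_inj l l' : sorted gtn l -> sorted gtn l' ->
    all (fun x => 0 < x) l -> all (fun x => 0 < x) l' ->
  diag_entry l =1 diag_entry l' -> l = l'.
Proof.
move=> l_decr l'_decr l_pos l'_pos eq_diag; apply: eq_from_part => // j j_gt0.
pose M := sumn l + sumn l' + j.
have shifted_le a : sumn a <= sumn l + sumn l' -> shifted_part a j <= M.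
  by move=> le_a; have := part_le_sumn a j; rewrite /shifted_part /M; lia.
rewrite (part_count_diag_entry l_decr j_gt0 (shifted_le l (leq_addr _ _))).
rewrite (part_count_diag_entry l'_decr j_gt0 (shifted_le l' (leq_addl _ _))).
by apply: eq_count => k /=; rewrite eq_diag.
Qed.

Section DiagonalInverse.

Variables (d : nat -> nat) (t N : nat).
Hypotheses (d_id : forall k, k <= t -> d k = k) (d_le_t : forall k, d k <= t)
  (d_noninc : forall x y, t < x -> x <= y -> d y <= d x)
  (d_vanish : forall k, N < k -> d k = 0).

Definition distinct_of_diag := [seq count (fun k => j <= d k) (iota 1 N) | j <- iota 1 t].

Lemma t_le_N : t <= N.
Proof.
rewrite leqNgt; apply/negP => lt_Nt.
by have := d_vanish lt_Nt; rewrite d_id // => t0; rewrite t0 in lt_Nt.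
Qed.

Lemma part_distinct_of_diag j : 0 < j <= t ->
  part distinct_of_diag j = count (fun k => j <= d k) (iota 1 N).
Proof.
case: j => // j /= lt_jt; rewrite /part /distinct_of_diag (nth_map 0) ?size_iota //.
by rewrite nth_iota // add1n.
Qed.

Lemma count_d_from j : 0 < j <= t ->
  count (fun k => j <= d k) (iota 1 N) = count (fun k => j <= d k) (iota j (N.+1 - j)).
Proof.
move=> /andP [j_gt0 le_jt]; have le_jN := leq_trans le_jt t_le_N.
have N_split : N = j.-1 + (N.+1 - j) by lia.
rewrite {1}N_split iotaD add1n prednK // count_cat count_eq0_in // => k.
rewrite mem_iota add1n prednK // => /andP [_ lt_kj].
by rewrite d_id -?ltnNge //; apply: ltnW (leq_trans lt_kj le_jt).
Qed.

Lemma count_d_le j : 0 < j <= t -> count (fun k => j <= d k) (iota 1 N) <= N.+1 - j.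
Proof. by move=> j_range; rewrite count_d_from // -[leqRHS](size_iota j) count_size. Qed.

Lemma count_d_succ_lt j : 0 < j <= t ->
  count (fun k => j.+1 <= d k) (iota 1 N) < count (fun k => j <= d k) (iota 1 N).
Proof.
move=> /andP [j_gt0 le_jt]; apply: count_ge_succ_lt; apply/mapP; exists j; last by rewrite d_id.
by rewrite mem_iota j_gt0 add1n ltnS (leq_trans le_jt t_le_N).
Qed.

Lemma leq_d_shifted_part j k : 0 < j <= t ->
  (j <= d k) = (j <= k) && (k <= shifted_part distinct_of_diag j).
Proof.
move=> j_range; have /andP [j_gt0 le_jt] := j_range.
have le_jN := leq_trans le_jt t_le_N.
set c := count (fun k => j <= d k) (iota 1 N).
have shiftedE : shifted_part distinct_of_diag j = c + j - 1.
  by rewrite /shifted_part part_distinct_of_diag.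
have le_cN : c <= N.+1 - j := count_d_le j_range.
have P_down x y : j <= x <= y -> y < j + (N.+1 - j) -> j <= d y -> j <= d x.
  move=> /andP [le_jx le_xy] _ le_jdy; have [le_xt | lt_tx] := leqP x t; first by rewrite d_id.
  exact: leq_trans le_jdy (d_noninc lt_tx le_xy).
have [lt_kj | le_jk] := ltnP k j.
  rewrite andFb d_id; first by rewrite leqNgt lt_kj.
  exact: ltnW (leq_trans lt_kj le_jt).
have [le_kN | lt_Nk] := leqP k N.
  rewrite andTb (count_iota_downward P_down) -?(count_d_from j_range) -/c ?shiftedE.
    by apply/idP/idP; lia.
  by rewrite le_jk /=; lia.
by rewrite d_vanish // andTb shiftedE; apply/idP/idP; lia.
Qed.

Lemma distinct_of_diag_decr : sorted gtn distinct_of_diag.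
Proof.
apply/(sortedP 0) => i; rewrite size_map size_iota => lt_it.
rewrite /distinct_of_diag !(nth_map 0) ?size_iota ?(ltnW lt_it) // !nth_iota ?(ltnW lt_it) //.
by rewrite -[1 + i]/(i.+1) -[1 + i.+1]/(i.+2); apply: count_d_succ_lt; apply: ltnW.
Qed.

Lemma distinct_of_diag_pos : all (fun x => 0 < x) distinct_of_diag.
Proof.
apply/allP => x /mapP [j]; rewrite mem_iota add1n ltnS => j_range ->.
exact: leq_ltn_trans (leq0n _) (count_d_succ_lt j_range).
Qed.

Lemma shifted_part_distinct_of_diag_le j : 0 < j <= size distinct_of_diag ->
  shifted_part distinct_of_diag j <= N.
Proof.
rewrite size_map size_iota => j_range; have := count_d_le j_range.
rewrite /shifted_part part_distinct_of_diag //; have := t_le_N; case/andP: j_range; lia.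
Qed.

Lemma diag_entry_distinct_of_diag k : diag_entry distinct_of_diag k = d k.
Proof.
apply: eqn_from_leq => j j_gt0.
rewrite (leq_diag_entry distinct_of_diag_decr _ j_gt0).
have [le_jt | lt_tj] := leqP j t; first by rewrite leq_d_shifted_part ?j_gt0.
rewrite /shifted_part part_eq0 ?size_map ?size_iota // add0n.
by have le_dt := d_le_t k; apply/idP/idP; lia.
Qed.

End DiagonalInverse.

Lemma diag_entry_surj a : sorted geq a -> all (fun x => 0 < x) a ->
  exists l, [/\ sorted gtn l, all (fun x => 0 < x) l, sumn l = sumn a
    & diag_entry l =1 diag_entry a].
Proof.
move=> a_sorted a_pos; have [t [d_id d_le_t d_noninc]] := diag_entry_staircase a_sorted a_pos.
have d_vanish k : sumn a < k -> diag_entry a k = 0 by apply: diag_entry_eq0.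
pose l := distinct_of_diag (diag_entry a) t (sumn a).
have diag_l : diag_entry l =1 diag_entry a.
  exact: diag_entry_distinct_of_diag d_id d_le_t d_noninc d_vanish.
exists l; split => //; first exact: distinct_of_diag_decr d_id d_vanish.
  exact: distinct_of_diag_pos d_id d_vanish.
rewrite -[RHS](sumn_diag_entry (size_le_sumn a_pos) (fun i => shifted_part_le_sumn a_pos)).
rewrite -(eq_map diag_l) sumn_diag_entry // => [|i].
  by rewrite size_map size_iota (t_le_N d_id d_vanish).
exact: (shifted_part_distinct_of_diag_le d_id d_vanish (j := i)).
Qed.

Lemma nth_strip_zeros s i : nth 0 (strip_zeros s) i = nth 0 s i.
Proof.
rewrite /strip_zeros; set r := rev s; set m := find _ r.
have zeros : take m r = nseq (size (take m r)) 0.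
  apply/all_pred1P/(all_nthP 0) => j; rewrite size_take_min leq_min => /andP [lt_jm _].
  by rewrite nth_take //=; apply/negbFE; apply: before_find lt_jm.
rewrite -[in RHS](revK s) -/r -[in RHS](cat_take_drop m r) rev_cat zeros rev_nseq nth_cat.
by case: ltnP => // le_i; rewrite nth_nseq nth_default //; case: ifP.
Qed.

Lemma nth_delta a k : all (fun x => 0 < x) a ->
  nth 0 (delta a) k = diag_entry a k.+1.
Proof.
move=> a_pos; rewrite /delta nth_strip_zeros.
have [lt_ka | le_ak] := ltnP k (sumn a).
  by rewrite (nth_map 0) ?size_iota // nth_iota // add1n.
by rewrite nth_default ?size_map ?size_iota // diag_entry_eq0.
Qed.

Lemma eq_delta a b : sumn a = sumn b -> diag_entry a =1 diag_entry b -> delta a = delta b.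
Proof. by move=> eq_sum eq_diag; rewrite /delta eq_sum (eq_map eq_diag). Qed.

Lemma delta_diag_entry_inj a b : all (fun x => 0 < x) a -> all (fun x => 0 < x) b ->
  delta a = delta b -> diag_entry a =1 diag_entry b.
Proof. by move=> a_pos b_pos eq_delta [|k] //; rewrite -!nth_delta // eq_delta. Qed.

Lemma delta_distinct_inj n l l' : distinct_partition n l -> distinct_partition n l' ->
  delta l = delta l' -> l = l'.
Proof.
move=> /distinct_partitionP [l_decr l_pos _] /distinct_partitionP [l'_decr l'_pos _].
by move=> /(delta_diag_entry_inj l_pos l'_pos); apply: diag_entry_inj.
Qed.

Lemma in_DeltaP n d : in_Delta n d <-> exists2 l, distinct_partition n l & delta l = d.
Proof.
split => [[a [[a_sorted [a_pos <-]] <-]] | [l [l_part _] <-]]; last by exists l.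
have [l [l_decr l_pos eq_sum eq_diag]] := diag_entry_surj a_sorted a_pos.
by exists l; [apply/distinct_partitionP | apply: eq_delta].
Qed.

Fixpoint short_seqs (T : Type) (r : seq T) (k : nat) : seq (seq T) :=
  [::] :: if k is k'.+1 then [seq x :: s | x <- r, s <- short_seqs r k'] else [::].

Lemma mem_short_seqs (T : eqType) (r : seq T) k s :
  (s \in short_seqs r k) = (size s <= k) && all (fun x => x \in r) s.
Proof.
elim: k s => [|k IH] [|x s] //=; rewrite inE /=.
apply/allpairsP/andP => [[[y t] /= [yr] + [-> ->]] | [lt_sk /andP [xr sr]]].
  by rewrite IH => /andP [le_tk tr]; rewrite ltnS le_tk /= yr.
by exists (x, s); rewrite /= IH -ltnS lt_sk.
Qed.

Definition partitionb n (a : seq nat) := [&& sorted geq a, all (fun x => 0 < x) a & sumn a == n].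

Lemma partitionP n a : reflect (is_partition n a) (partitionb n a).
Proof. by apply: (iffP and3P) => [[? ? /eqP] | [? [? /eqP]]]. Qed.

Definition partitions n := [seq a <- undup (short_seqs (iota 1 n) n) | partitionb n a].

Lemma enumerates_partitions n : enumerates (is_partition n) (partitions n).
Proof.
split=> [|a]; first by rewrite filter_uniq ?undup_uniq.
rewrite mem_filter mem_undup mem_short_seqs.
split=> [/andP [/partitionP] // | a_part]; rewrite (introT (partitionP _ _) a_part).
have [_ [a_pos <-]] := a_part; rewrite size_le_sumn //=.
apply/allP => x xa; rewrite mem_iota add1n ltnS (allP a_pos) //=.
by rewrite -(nth_index 0 xa); exact: (part_le_sumn a (index x a).+1).
Qed.

Lemma enumerates_filter (P Q : seq nat -> Prop) (p : pred (seq nat)) L :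
  enumerates P L -> (forall x, Q x <-> P x /\ p x) -> enumerates Q (filter p L).
Proof.
move=> [L_uniq memL] Q_iff; split=> [|x]; first exact: filter_uniq.
by rewrite mem_filter Q_iff -memL andbC; split=> [/andP [] | [-> ->]].
Qed.

Lemma enumerates_map (P Q : seq nat -> Prop) L (f : seq nat -> seq nat) :
    enumerates P L -> (forall x y, P x -> P y -> f x = f y -> x = y) ->
    (forall z, Q z <-> exists2 x, P x & f x = z) ->
  enumerates Q (map f L).
Proof.
move=> [L_uniq memL] f_inj Q_iff; split=> [|z].
  by rewrite map_inj_in_uniq // => x y /memL Px /memL Py; apply: f_inj.
rewrite Q_iff; split=> [/mapP [x /memL Px ->] | [x /memL Lx <-]]; first by exists x.
exact: map_f.
Qed.

Lemma enumerates_size_leq (P Q : seq nat -> Prop) L M (f : seq nat -> seq nat) :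
    enumerates P L -> enumerates Q M ->
    (forall x y, P x -> P y -> f x = f y -> x = y) -> (forall x, P x -> Q (f x)) ->
  size L <= size M.
Proof.
move=> [L_uniq memL] [M_uniq memM] f_inj PQ; rewrite -(size_map f).
apply: uniq_leq_size => [|_ /mapP [x /memL Px ->]]; last exact/memM/PQ.
by rewrite map_inj_in_uniq // => x y /memL Px /memL Py; apply: f_inj.
Qed.

Theorem corollary2p4 (n : nat) : 0 < n ->
  exists (D P O : seq (seq nat)),
    [/\ enumerates (in_Delta n) D, enumerates (distinct_partition n) P,
        enumerates (odd_partition n) O,
        size D = size P & size P = size O].
Proof.
move=> _; set P := [seq l <- partitions n | uniq l].
set O := [seq y <- partitions n | all odd y].
have enumP : enumerates (distinct_partition n) P.
  exact: enumerates_filter (enumerates_partitions n) (fun l => iff_refl _).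
have enumO : enumerates (odd_partition n) O.
  exact: enumerates_filter (enumerates_partitions n) (fun y => iff_refl _).
exists (map delta P), P, O; split=> //.
- apply: enumerates_map enumP _ _ => [l l' | d]; [exact: delta_distinct_inj | exact: in_DeltaP].
- exact: size_map.
apply/anti_leq/andP; split.
  exact: (enumerates_size_leq enumP enumO (@odd_of_distinct_inj n)
    (@odd_of_distinct_partition n)).
exact: (enumerates_size_leq enumO enumP (@distinct_of_odd_inj n) (@distinct_of_odd_partition n)).
Qed.
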